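(* Let $M$ and $N$ be non-trivial $0$-left cancellative monoids with zero. If $M$ and $N$ both admit least common multiples (respectively, are both finitely aligned, respectively, are both strongly finitely aligned), then $M*_0N$ is a $0$-left cancellative monoid that admits least common multiples (respectively, is finitely aligned, respectively, is strongly finitely aligned).
   Context: A monoid with zero is non-trivial if $0\neq1$; $0$-left cancellative: $st=sr\neq0\Rightarrow t=r$. The $0$-free product $M*_0N$ is the coproduct in the category of monoids with zero (equivalently the Rees quotient of the free product $M*N$ by the ideal generated by the zeros of $M$ and $N$). A monoid $T$ with zero admits least common multiples if for all $s,t\in T$ there is $r\in T$ with $sT\cap tT=rT$. $T$ is finitely aligned if for all $s,t\in T$ there is a finite set $R\subseteq T$ with $sT\cap tT=\bigcup_{r\in R}rT$. $T$ is strongly finitely aligned if for all $s,t\in T$ there is a finite (possibly empty) $B\subseteq T\setminus\{0\}$ with $sT\cap tT=\bigcup_{b\in B}bT$ (interpreted as $\{0\}$ if $B=\emptyset$) and $bT\cap b'T=\{0\}$ for distinct $b,b'\in B$. *)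

From Stdlib Require Import List.
Import ListNotations.

Record monoid0 := Monoid0 {
  car :> Type;
  mul : car -> car -> car;
  one : car;
  zero : car;
  mulA : forall x y z, mul x (mul y z) = mul (mul x y) z;
  mul1l : forall x, mul one x = x;
  mul1r : forall x, mul x one = x;
  mul0l : forall x, mul zero x = zero;
  mul0r : forall x, mul x zero = zero
}.
Arguments mul {_} _ _.
Arguments one {_}.
Arguments zero {_}.

Record hom0 (M N : monoid0) := Hom0 {
  hfun :> M -> N;
  hmul : forall x y, hfun (mul x y) = mul (hfun x) (hfun y);
  hone : hfun one = one;
  hzero : hfun zero = zero
}.

Definition nontrivial (M : monoid0) : Prop := (zero : M) <> one.

Definition zero_left_cancellative (M : monoid0) : Prop :=
  forall s t r : M, mul s t = mul s r -> mul s t <> zero -> t = r.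

Definition in_rideal {M : monoid0} (s x : M) : Prop := exists y : M, x = mul s y.

Definition admits_lcm (M : monoid0) : Prop :=
  forall s t : M, exists r : M,
    forall x : M, (in_rideal s x /\ in_rideal t x) <-> in_rideal r x.

Definition finitely_aligned (M : monoid0) : Prop :=
  forall s t : M, exists R : list M,
    forall x : M, (in_rideal s x /\ in_rideal t x) <->
                  (exists r, In r R /\ in_rideal r x).

(** The union over the (finite, possibly empty) set B is read as {0} when B is
    empty; since 0 lies in every bT, "x = 0 \/ ..." expresses exactly this. *)
Definition strongly_finitely_aligned (M : monoid0) : Prop :=
  forall s t : M, exists B : list M,
    (forall b, In b B -> b <> zero) /\
    (forall x : M, (in_rideal s x /\ in_rideal t x) <->
                   (x = zero \/ exists b, In b B /\ in_rideal b x)) /\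
    (forall b b', In b B -> In b' B -> b <> b' ->
       forall x : M, in_rideal b x -> in_rideal b' x -> x = zero).

(** (P, iM, iN) is a coproduct of M and N in the category of monoids with zero;
    i.e. P is (up to isomorphism) the 0-free product M *_0 N. *)
Definition is_coproduct0 (M N P : monoid0) (iM : hom0 M P) (iN : hom0 N P) : Prop :=
  forall (Q : monoid0) (f : hom0 M Q) (g : hom0 N Q),
    (exists h : hom0 P Q, (forall m, h (iM m) = f m) /\ (forall n, h (iN n) = g n)) /\
    (forall h h' : hom0 P Q,
        (forall m, h (iM m) = f m) -> (forall n, h (iN n) = g n) ->
        (forall m, h' (iM m) = f m) -> (forall n, h' (iN n) = g n) ->
        forall p, h p = h' p).

(* Every element of the 0-free product is 0 or a reduced word: an alternating product of
   letters of M and N different from 0 and 1; the word is unique because M and N act on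
   reduced words (van der Waerden's trick).  Dropping trailing letters that have a right
   inverse, a principal right ideal sP is {0}, all of P, or generated by a word w c whose
   last letter c has no right inverse.  Comparing the normal forms of a nonzero common
   multiple of w c and v d shows that either one of the two ideals contains the other, or
   w = v and c, d lie in the same factor X; then sP ∩ tP is the image of cX ∩ dX under
   y |-> w y, which transports least common multiples, finite alignment and strong finite
   alignment from X to P.  0-left cancellation is checked letter by letter. *)

From Stdlib Require Import List Classical ClassicalEpsilon FunctionalExtensionality ProofIrrelevance.
Import ListNotations.

Local Notation decP := excluded_middle_informative.

Lemma sig_eq {A : Type} {Q : A -> Prop} (u v : {x | Q x}) :
  proj1_sig u = proj1_sig v -> u = v.
Proof. apply eq_sig_hprop; intros; apply proof_irrelevance. Qed.

Definition has_right_inverse {T : monoid0} (a : T) : Prop := exists d, mul a d = one.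

Definition common_multiple {T : monoid0} (s t x : T) : Prop := in_rideal s x /\ in_rideal t x.

Definition principal {T : monoid0} (I : T -> Prop) : Prop :=
  exists r, forall x, I x <-> in_rideal r x.

Definition finitely_generated {T : monoid0} (I : T -> Prop) : Prop :=
  exists R : list T, forall x, I x <-> exists r, In r R /\ in_rideal r x.

Definition disjointly_generated {T : monoid0} (I : T -> Prop) : Prop :=
  exists B : list T,
    (forall b, In b B -> b <> zero) /\
    (forall x, I x <-> x = zero \/ exists b, In b B /\ in_rideal b x) /\
    (forall b b', In b B -> In b' B -> b <> b' ->
       forall x, in_rideal b x -> in_rideal b' x -> x = zero).

Lemma in_rideal_mulr {T : monoid0} (s y : T) : in_rideal s (mul s y).
Proof. exists y; reflexivity. Qed.

Lemma in_rideal_refl {T : monoid0} (s : T) : in_rideal s s.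
Proof. exists one; symmetry; apply mul1r. Qed.

Lemma in_rideal_trans {T : monoid0} (r s x : T) :
  in_rideal r s -> in_rideal s x -> in_rideal r x.
Proof. intros [y ->] [z ->]. exists (mul y z). symmetry; apply mulA. Qed.

Lemma in_rideal0r {T : monoid0} (s : T) : in_rideal s zero.
Proof. exists zero; symmetry; apply mul0r. Qed.

Lemma in_rideal0l {T : monoid0} (x : T) : in_rideal zero x -> x = zero.
Proof. intros [y ->]; apply mul0l. Qed.

Lemma in_rideal_mul_right_invertible {T : monoid0} (s u x : T) :
  has_right_inverse u -> in_rideal (mul s u) x <-> in_rideal s x.
Proof.
  intros [d Hd]. split; [apply in_rideal_trans, in_rideal_mulr|].
  apply in_rideal_trans. exists d. rewrite <- mulA, Hd, mul1r. reflexivity.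
Qed.

Lemma principal_common_multiple_trivial {T : monoid0} (s t : T) :
  (forall x, common_multiple s t x -> x = zero) -> principal (common_multiple s t).
Proof.
  intro H0. exists zero. intro x. split.
  - intro Hx. rewrite (H0 x Hx). apply in_rideal0r.
  - intro Hx. rewrite (in_rideal0l x Hx). split; apply in_rideal0r.
Qed.

Lemma principal_common_multiple_l {T : monoid0} (s t : T) :
  in_rideal s t -> principal (common_multiple s t).
Proof.
  intro Hst. exists t; intro x; split; [intros [_ Hx]; exact Hx|].
  intro Hx. split; [exact (in_rideal_trans _ _ _ Hst Hx)|exact Hx].
Qed.

Lemma principal_common_multiple_r {T : monoid0} (s t : T) :
  in_rideal t s -> principal (common_multiple s t).
Proof.
  intro Hts. exists s; intro x; split; [intros [Hx _]; exact Hx|].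
  intro Hx. split; [exact Hx|exact (in_rideal_trans _ _ _ Hts Hx)].
Qed.

Lemma principal_finitely_generated {T : monoid0} (I : T -> Prop) :
  principal I -> finitely_generated I.
Proof.
  intros [r Hr]. exists [r]. intro x. rewrite Hr. split.
  - intro Hx. exists r. split; [left|]; auto.
  - intros [r' [[<-|[]] Hx]]. exact Hx.
Qed.

Lemma principal_disjointly_generated {T : monoid0} (I : T -> Prop) :
  principal I -> disjointly_generated I.
Proof.
  intros [r Hr]. destruct (decP (r = zero)) as [->|Hr0].
  - exists []. split; [intros b []|split; [|intros b b' []]].
    intro x. rewrite Hr. split.
    + intro Hx. left. exact (in_rideal0l x Hx).
    + intros [->|[b [[] _]]]. apply in_rideal0r.
  - exists [r]. split; [intros b [<-|[]]; exact Hr0|split].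
    + intro x. rewrite Hr. split.
      * intro Hx. right. exists r. split; [left|]; auto.
      * intros [->|[b [[<-|[]] Hx]]]; [apply in_rideal0r|exact Hx].
    + intros b b' [<-|[]] [<-|[]] Hne. contradiction.
Qed.

Section IdealImage.
Variables (X T : monoid0) (phi : X -> T).
Hypothesis phi_rideal : forall r y, in_rideal r y -> in_rideal (phi r) (phi y).
Variables (I : X -> Prop) (J : T -> Prop).
Hypothesis image_IJ : forall x, J x <-> exists y, I y /\ in_rideal (phi y) x.

Lemma principal_image : principal I -> principal J.
Proof.
  intros [r Hr]. exists (phi r). intro x. rewrite image_IJ. split.
  - intros [y [Iy Hx]]. apply Hr in Iy. exact (in_rideal_trans _ _ _ (phi_rideal _ _ Iy) Hx).
  - intro Hx. exists r. split; [apply Hr, in_rideal_refl|exact Hx].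
Qed.

Lemma finitely_generated_image : finitely_generated I -> finitely_generated J.
Proof.
  intros [R HR]. exists (map phi R). intro x. rewrite image_IJ. split.
  - intros [y [Iy Hx]]. destruct (proj1 (HR y) Iy) as [r [Hr Hy]].
    exists (phi r). split; [apply in_map; exact Hr|].
    exact (in_rideal_trans _ _ _ (phi_rideal _ _ Hy) Hx).
  - intros [r' [Hr' Hx]]. apply in_map_iff in Hr'. destruct Hr' as [r [<- Hr]].
    exists r. split; [apply HR; exists r; split; [exact Hr|apply in_rideal_refl]|exact Hx].
Qed.

Hypothesis phi_zero : phi zero = zero.
Hypothesis phi_neq0 : forall y, y <> zero -> phi y <> zero.
Hypothesis phi_reflect : forall y y' x, in_rideal (phi y) x -> in_rideal (phi y') x ->
  x <> zero -> exists w, w <> zero /\ common_multiple y y' w.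

Lemma disjointly_generated_image : disjointly_generated I -> disjointly_generated J.
Proof.
  intros [B [HB0 [HBI HBd]]]. exists (map phi B). split; [|split].
  - intros b' Hb'. apply in_map_iff in Hb'. destruct Hb' as [b [<- Hb]]. exact (phi_neq0 b (HB0 b Hb)).
  - intro x. rewrite image_IJ. split.
    + intros [y [Iy Hx]]. destruct (proj1 (HBI y) Iy) as [->|[b [Hb Hy]]].
      * left. rewrite phi_zero in Hx. exact (in_rideal0l x Hx).
      * right. exists (phi b). split; [apply in_map; exact Hb|].
        exact (in_rideal_trans _ _ _ (phi_rideal _ _ Hy) Hx).
    + intros [->|[b' [Hb' Hx]]].
      * exists zero. split; [apply HBI; left; reflexivity|apply in_rideal0r].
      * apply in_map_iff in Hb'. destruct Hb' as [b [<- Hb]].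
        exists b. split; [apply HBI; right; exists b; split; [exact Hb|apply in_rideal_refl]|exact Hx].
  - intros b1' b2' Hb1' Hb2' Hne x Hx1 Hx2.
    apply in_map_iff in Hb1'. destruct Hb1' as [b1 [<- Hb1]].
    apply in_map_iff in Hb2'. destruct Hb2' as [b2 [<- Hb2]].
    apply NNPP. intro Hx0.
    destruct (phi_reflect b1 b2 x Hx1 Hx2 Hx0) as [w [Hw0 [Hw1 Hw2]]].
    apply Hw0. apply (HBd b1 b2 Hb1 Hb2); [congruence|exact Hw1|exact Hw2].
Qed.

End IdealImage.

Definition hom_id (T : monoid0) : hom0 T T :=
  Hom0 T T (fun x => x) (fun _ _ => eq_refl) eq_refl eq_refl.

Definition hom_comp {T U V : monoid0} (g : hom0 U V) (f : hom0 T U) : hom0 T V.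
Proof.
  refine (Hom0 T V (fun x => g (f x)) _ _ _).
  - intros x y. rewrite !hmul. reflexivity.
  - rewrite !hone. reflexivity.
  - rewrite !hzero. reflexivity.
Defined.

Section Submonoid.
Variables (T : monoid0) (S : T -> Prop).
Hypotheses (S1 : S one) (S0 : S zero) (SM : forall p q, S p -> S q -> S (mul p q)).

Definition submonoid0 : monoid0.
Proof.
  refine (Monoid0 {p | S p}
    (fun x y => exist S (mul (proj1_sig x) (proj1_sig y)) (SM _ _ (proj2_sig x) (proj2_sig y)))
    (exist S one S1) (exist S zero S0) _ _ _ _ _);
  intros; apply sig_eq; simpl; auto using mulA, mul1l, mul1r, mul0l, mul0r.
Defined.

Definition submonoid_incl : hom0 submonoid0 T :=
  Hom0 submonoid0 T (@proj1_sig _ _) (fun _ _ => eq_refl) eq_refl eq_refl.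

Definition submonoid_corestr {U : monoid0} (f : hom0 U T) (Hf : forall u, S (f u)) :
  hom0 U submonoid0.
Proof.
  refine (Hom0 U submonoid0 (fun u => exist S (f u) (Hf u)) _ _ _);
  intros; apply sig_eq; simpl; auto using hmul, hone, hzero.
Defined.

End Submonoid.

(* A coproduct is generated by the images of its two factors: corestrict both
   injections to the submonoid S and compare the induced map with the identity. *)
Lemma coproduct_generated (M N P : monoid0) (iM : hom0 M P) (iN : hom0 N P)
    (S : P -> Prop) (S1 : S one) (S0 : S zero) (SM : forall p q, S p -> S q -> S (mul p q)) :
  is_coproduct0 M N P iM iN -> (forall m, S (iM m)) -> (forall n, S (iN n)) -> forall p, S p.
Proof.
  intros coprod HM HN p.
  destruct (proj1 (coprod _ (submonoid_corestr P S S1 S0 SM iM HM)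
                             (submonoid_corestr P S S1 S0 SM iN HN))) as [h [hM hN]].
  pose (g := hom_comp (submonoid_incl P S S1 S0 SM) h).
  assert (Hg : g p = hom_id P p).
  { apply (proj2 (coprod P iM iN)); intro x; simpl;
      [rewrite hM|rewrite hN|..]; reflexivity. }
  simpl in Hg. rewrite <- Hg. apply proj2_sig.
Qed.

Definition obind {A B : Type} (f : A -> option B) (o : option A) : option B :=
  match o with Some a => f a | None => None end.

Definition partial_maps (A : Type) : monoid0.
Proof.
  refine (Monoid0 (A -> option A) (fun f g a => obind f (g a)) Some (fun _ => None) _ _ _ _ _);
  intros; apply functional_extensionality; intro a; unfold obind; try reflexivity.
  - destruct (_ a) as [b|]; [destruct (_ b)|]; reflexivity.
  - destruct (_ a); reflexivity.
  - destruct (_ a); reflexivity.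
Defined.


Section Words.
Variables M N : monoid0.

Definition letter : Type := (M + N)%type.

Definition side (c : letter) : bool := match c with inl _ => true | inr _ => false end.

Definition proper (c : letter) : Prop :=
  match c with inl a => a <> zero /\ a <> one | inr b => b <> zero /\ b <> one end.

Fixpoint reduced (l : list letter) : Prop :=
  match l with
  | [] => True
  | c :: k => proper c /\ reduced k /\ match k with [] => True | d :: _ => side c <> side d end
  end.

Lemma reduced_app_l l k : reduced (l ++ k) -> reduced l.
Proof.
  induction l as [|c l IH]; simpl; auto. intros [Hc [Hl Hs]]. split; [|split]; auto.
  destruct l; auto.
Qed.

Lemma reduced_app_cons l c k : reduced (l ++ c :: k) <-> reduced (l ++ [c]) /\ reduced (c :: k).
Proof.
  induction l as [|e l IH]; simpl.
  - split; [intros H; split; [split; [apply H|auto]|exact H]|tauto].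
  - rewrite IH. destruct l as [|f l]; simpl; tauto.
Qed.

Lemma reduced_snoc_same_side l c d :
  reduced (l ++ [c]) -> proper d -> side d = side c -> reduced (l ++ [d]).
Proof.
  induction l as [|e l IH]; simpl; intros H Hd Hs; [tauto|].
  destruct H as [He [Hl Hsd]]. split; [exact He|split; [auto|]].
  destruct l; simpl in *; congruence.
Qed.

(* M or N together with its letters, so that the word combinatorics is done once for both. *)
Record factor := Factor {
  fmon :> monoid0;
  fin : fmon -> letter;
  fout : letter -> option fmon;
  ftag : bool;
  fout_fin : forall x, fout (fin x) = Some x;
  fout_Some : forall c x, fout c = Some x -> c = fin x;
  side_fin : forall x, side (fin x) = ftag;
  fout_None : forall c, fout c = None <-> side c <> ftag;
  proper_fin : forall x, proper (fin x) <-> x <> zero /\ x <> one;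
  fnontrivial : nontrivial fmon
}.

Definition factorM (ntM : nontrivial M) : factor.
Proof.
  refine (Factor M inl (fun c => match c with inl a => Some a | inr _ => None end) true
            _ _ _ _ _ ntM); try reflexivity.
  - intros [a|b] x; simpl; congruence.
  - intros [a|b]; simpl; split; congruence.
Defined.

Definition factorN (ntN : nontrivial N) : factor.
Proof.
  refine (Factor N inr (fun c => match c with inr b => Some b | inl _ => None end) false
            _ _ _ _ _ ntN); try reflexivity.
  - intros [a|b] x; simpl; congruence.
  - intros [a|b]; simpl; split; congruence.
Defined.

Section Factor.
Variable S : factor.
Local Notation inj := (fin S).
Local Notation out := (fout S).

Lemma fin_inj (x y : S) : inj x = inj y -> x = y.
Proof. intro E. apply (f_equal out) in E. rewrite !fout_fin in E. congruence. Qed.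

Definition headless (l : list letter) : Prop :=
  match l with [] => True | c :: _ => out c = None end.

Lemma reduced_cons_fin (a : S) l :
  reduced (inj a :: l) <-> (a <> zero /\ a <> one) /\ reduced l /\ headless l.
Proof.
  simpl. rewrite proper_fin. destruct l as [|d l]; simpl; [tauto|].
  rewrite fout_None, side_fin. intuition congruence.
Qed.

Lemma reduced_snoc_fin l (a y : S) :
  reduced (l ++ [inj a]) -> y <> zero -> y <> one -> reduced (l ++ [inj y]).
Proof.
  intros H Hy0 Hy1. apply (reduced_snoc_same_side _ _ _ H).
  - apply proper_fin; auto.
  - rewrite !side_fin; reflexivity.
Qed.

Definition split_head (l : list letter) : S * list letter :=
  match l with
  | c :: k => match out c with Some b => (b, k) | None => (one, l) end
  | [] => (one, [])
  end.

(* [push c k] is the normal form of [c k] when [k] does not start with a letter of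
   this factor; [None] stands for the zero of the free product. *)
Definition push (c : S) (k : list letter) : option (list letter) :=
  if decP (c = zero) then None else if decP (c = one) then Some k else Some (inj c :: k).

Definition act (a : S) (l : list letter) : option (list letter) :=
  push (mul a (fst (split_head l))) (snd (split_head l)).

Lemma push0 k : push zero k = None.
Proof. unfold push. destruct (decP (zero = zero)); congruence. Qed.

Lemma push1 k : push one k = Some k.
Proof.
  unfold push. destruct (decP (one = zero)) as [E|_]; [destruct (fnontrivial S); auto|].
  destruct (decP (one = one)); congruence.
Qed.

Lemma push_proper c k : c <> zero -> c <> one -> push c k = Some (inj c :: k).
Proof. intros H0 H1. unfold push. destruct (decP (c = zero)); destruct (decP (c = one)); congruence. Qed.

Lemma push_None c k : push c k = None -> c = zero.
Proof. unfold push. destruct (decP (c = zero)); destruct (decP (c = one)); congruence. Qed.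

Lemma split_head_headless l : headless l -> split_head l = (one, l).
Proof. destruct l as [|c l]; simpl; [reflexivity|]. intros ->. reflexivity. Qed.

Lemma split_head_spec l : reduced l ->
  reduced (snd (split_head l)) /\ headless (snd (split_head l)) /\
  push (fst (split_head l)) (snd (split_head l)) = Some l.
Proof.
  intro Hl. destruct l as [|c k]; [simpl; rewrite push1; auto|simpl].
  destruct (out c) as [b|] eqn:Ec; simpl.
  - apply fout_Some in Ec. subst c. apply reduced_cons_fin in Hl.
    destruct Hl as [[Hb0 Hb1] [Hk Hh]]. rewrite push_proper; auto.
  - rewrite push1. auto.
Qed.

Lemma split_head_push c k l : headless k -> push c k = Some l -> split_head l = (c, k).
Proof.
  intros Hk E. destruct (decP (c = zero)) as [->|H0]; [rewrite push0 in E; discriminate|].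
  destruct (decP (c = one)) as [->|H1].
  - rewrite push1 in E. injection E as <-. apply split_head_headless, Hk.
  - rewrite push_proper in E by auto. injection E as <-. simpl. rewrite fout_fin. reflexivity.
Qed.

Lemma reduced_push c k l : reduced k -> headless k -> push c k = Some l -> reduced l.
Proof.
  intros Rk Hk E. destruct (decP (c = zero)) as [->|H0]; [rewrite push0 in E; discriminate|].
  destruct (decP (c = one)) as [->|H1].
  - rewrite push1 in E. congruence.
  - rewrite push_proper in E by auto. injection E as <-. apply reduced_cons_fin; auto.
Qed.

Lemma act_reduced a l l' : reduced l -> act a l = Some l' -> reduced l'.
Proof. intros Hl. destruct (split_head_spec l Hl) as [Rk [Hk _]]. apply reduced_push; auto. Qed.

Lemma act0 l : act zero l = None.
Proof. unfold act. rewrite mul0l. apply push0. Qed.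

Lemma act1 l : reduced l -> act one l = Some l.
Proof. intro Hl. unfold act. rewrite mul1l. apply split_head_spec, Hl. Qed.

Lemma act_mul a a' l : reduced l -> act (mul a a') l = obind (act a) (act a' l).
Proof.
  intro Hl. destruct (split_head_spec l Hl) as [_ [Hk _]].
  unfold act at 1 3. rewrite <- mulA.
  destruct (push (mul a' (fst (split_head l))) (snd (split_head l))) as [l'|] eqn:E; simpl.
  - unfold act. rewrite (split_head_push _ _ _ Hk E). reflexivity.
  - apply push_None in E. rewrite E, mul0r. apply push0.
Qed.

Lemma act_cons a l : reduced (inj a :: l) -> act a l = Some (inj a :: l).
Proof.
  intro H. apply reduced_cons_fin in H. destruct H as [[Ha0 Ha1] [_ Hh]].
  unfold act. rewrite split_head_headless by exact Hh. simpl. rewrite mul1r. apply push_proper; auto.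
Qed.

Lemma act_inj (zlc : zero_left_cancellative S) a k k' l :
  reduced k -> reduced k' -> act a k = Some l -> act a k' = Some l -> k = k'.
Proof.
  intros Hk Hk' E E'.
  destruct (split_head_spec k Hk) as [_ [Hh Ek]], (split_head_spec k' Hk') as [_ [Hh' Ek']].
  unfold act in E, E'.
  pose proof (split_head_push _ _ _ Hh E) as S1. rewrite (split_head_push _ _ _ Hh' E') in S1.
  injection S1 as Eb Erest.
  assert (Hnz : mul a (fst (split_head k)) <> zero).
  { intro Z. rewrite Z, push0 in E. discriminate. }
  assert (Eb' : fst (split_head k') = fst (split_head k)) by (apply (zlc a); congruence).
  rewrite Eb', Erest in Ek'. congruence.
Qed.

Lemma act_not_right_invertible a k l : reduced k -> ~ has_right_inverse a ->
  act a k = Some l -> exists m k1, l = inj (mul a m) :: k1 /\ headless k1.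
Proof.
  intros Hk Ha E. destruct (split_head_spec k Hk) as [_ [Hh _]]. unfold act in E.
  exists (fst (split_head k)), (snd (split_head k)). split; [|exact Hh].
  destruct (decP (mul a (fst (split_head k)) = zero)) as [Z|H0]; [rewrite Z, push0 in E; discriminate|].
  destruct (decP (mul a (fst (split_head k)) = one)) as [U|H1]; [destruct Ha; eexists; exact U|].
  rewrite push_proper in E by auto. congruence.
Qed.

Definition rword : Type := {l : list letter | reduced l}.

Definition option_sub {A : Type} (Q : A -> Prop) (o : option A) :
  (forall x, o = Some x -> Q x) -> option {x | Q x} :=
  match o with Some x => fun H => Some (exist Q x (H x eq_refl)) | None => fun _ => None end.

Lemma option_sub_val {A : Type} (Q : A -> Prop) o H :
  option_map (@proj1_sig _ Q) (option_sub Q o H) = o.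
Proof. destruct o; reflexivity. Qed.

Lemma option_map_val_inj {A : Type} (Q : A -> Prop) (u v : option {x | Q x}) :
  option_map (@proj1_sig _ Q) u = option_map (@proj1_sig _ Q) v -> u = v.
Proof.
  destruct u as [u|], v as [v|]; simpl; intro E; try discriminate; [|reflexivity].
  f_equal. apply sig_eq. injection E as E. exact E.
Qed.

Definition ract (a : S) (w : rword) : option rword :=
  option_sub reduced (act a (proj1_sig w)) (fun l E => act_reduced a _ l (proj2_sig w) E).

Lemma ract_val a w : option_map (@proj1_sig _ _) (ract a w) = act a (proj1_sig w).
Proof. apply option_sub_val. Qed.

Definition act_hom : hom0 S (partial_maps rword).
Proof.
  refine (Hom0 S (partial_maps rword) ract _ _ _);
  [intros a a'|..]; apply functional_extensionality; intro w; apply option_map_val_inj;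
  rewrite ?ract_val; simpl; rewrite ?ract_val.
  - rewrite act_mul by exact (proj2_sig w). destruct (ract a' w) as [w'|] eqn:E; simpl.
    + rewrite <- ract_val, E. simpl. symmetry. apply ract_val.
    + rewrite <- ract_val, E. reflexivity.
  - apply act1, proj2_sig.
  - apply act0.
Defined.

End Factor.

Section FreeProduct.
Variables (P : monoid0) (iM : hom0 M P) (iN : hom0 N P).
Hypotheses (ntM : nontrivial M) (ntN : nontrivial N).
Hypothesis coprod : is_coproduct0 M N P iM iN.

Definition iota (c : letter) : P := match c with inl a => iM a | inr b => iN b end.

Definition eval (l : list letter) : P := fold_right (fun c p => mul (iota c) p) one l.

Definition evalo (o : option (list letter)) : P :=
  match o with Some l => eval l | None => zero end.

Lemma eval_app l k : eval (l ++ k) = mul (eval l) (eval k).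
Proof. induction l as [|c l IH]; simpl; [rewrite mul1l|rewrite IH, mulA]; reflexivity. Qed.

Lemma eval_snoc l c : eval (l ++ [c]) = mul (eval l) (iota c).
Proof. rewrite eval_app. simpl. rewrite mul1r. reflexivity. Qed.

Lemma eval_snoc_cons l c k : eval (l ++ c :: k) = mul (eval (l ++ [c])) (eval k).
Proof. rewrite eval_snoc, eval_app. simpl. rewrite mulA. reflexivity. Qed.

Section FactorEval.
Variables (S : factor) (iX : hom0 S P).
Hypothesis iota_fin : forall x, iota (fin S x) = iX x.

Lemma evalo_push c k : evalo (push S c k) = mul (iX c) (eval k).
Proof.
  destruct (decP (c = zero)) as [->|H0]; [rewrite push0, hzero, mul0l; reflexivity|].
  destruct (decP (c = one)) as [->|H1]; [rewrite push1, hone, mul1l; reflexivity|].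
  rewrite push_proper by auto. simpl. rewrite iota_fin. reflexivity.
Qed.

Lemma eval_act a l : reduced l -> mul (iX a) (eval l) = evalo (act S a l).
Proof.
  intro Hl. destruct (split_head_spec S l Hl) as [_ [_ E]].
  change (eval l) with (evalo (Some l)). rewrite <- E, evalo_push.
  unfold act. rewrite evalo_push, hmul, mulA. reflexivity.
Qed.

End FactorEval.

Definition act_letter (c : letter) : list letter -> option (list letter) :=
  match c with inl a => act (factorM ntM) a | inr b => act (factorN ntN) b end.

Lemma eval_act_letter c k : reduced k -> mul (iota c) (eval k) = evalo (act_letter c k).
Proof.
  destruct c as [a|b]; [exact (eval_act (factorM ntM) iM (fun _ => eq_refl) a k)
                       |exact (eval_act (factorN ntN) iN (fun _ => eq_refl) b k)].
Qed.

Lemma act_letter_reduced c k l : reduced k -> act_letter c k = Some l -> reduced l.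
Proof. destruct c; apply act_reduced. Qed.

Lemma act_letter_cons c l : reduced (c :: l) -> act_letter c l = Some (c :: l).
Proof. destruct c as [a|b]; [apply (act_cons (factorM ntM))|apply (act_cons (factorN ntN))]. Qed.

Definition has_normal_form (p : P) : Prop := p = zero \/ exists l, reduced l /\ p = eval l.

Lemma has_normal_form_iota_mul c q : has_normal_form q -> has_normal_form (mul (iota c) q).
Proof.
  intros [->|[k [Hk ->]]]; [left; apply mul0r|].
  rewrite eval_act_letter by exact Hk. destruct (act_letter c k) as [l|] eqn:E; simpl.
  - right. exists l. split; [exact (act_letter_reduced c k l Hk E)|reflexivity].
  - left. reflexivity.
Qed.

Lemma has_normal_form_mul p q : has_normal_form p -> has_normal_form q -> has_normal_form (mul p q).
Proof.
  intros [->|[l [_ ->]]] Hq; [left; apply mul0l|].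
  induction l as [|c l IH]; simpl; [rewrite mul1l; exact Hq|].
  rewrite <- mulA. apply has_normal_form_iota_mul, IH.
Qed.

Lemma has_normal_form_iota c : has_normal_form (iota c).
Proof.
  rewrite <- (mul1r _ (iota c)). apply has_normal_form_iota_mul. right. exists []. simpl; auto.
Qed.

Lemma normal_form_exists p : has_normal_form p.
Proof.
  apply (coproduct_generated M N P iM iN has_normal_form); auto.
  - right. exists []. simpl; auto.
  - left. reflexivity.
  - exact has_normal_form_mul.
  - intro m. exact (has_normal_form_iota (inl m)).
  - intro n. exact (has_normal_form_iota (inr n)).
Qed.

(* van der Waerden's trick: the actions of M and N on reduced words induce one of P. *)
Definition word_hom : hom0 P (partial_maps (rword)) :=
  proj1_sig (constructive_indefinite_description _
    (proj1 (coprod _ (act_hom (factorM ntM)) (act_hom (factorN ntN))))).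

Lemma word_hom_iota c w :
  option_map (@proj1_sig _ _) (word_hom (iota c) w) = act_letter c (proj1_sig w).
Proof.
  unfold word_hom. destruct (constructive_indefinite_description _ _) as [h [hM hN]]. simpl.
  destruct c as [a|b]; simpl; [rewrite hM|rewrite hN]; apply ract_val.
Qed.

Definition normal_form (p : P) : option (list letter) :=
  option_map (@proj1_sig _ _) (word_hom p (exist reduced [] I)).

Lemma normal_form_eval l : reduced l -> normal_form (eval l) = Some l.
Proof.
  unfold normal_form. induction l as [|c l IH]; intro Hl; [simpl; rewrite hone; reflexivity|].
  simpl. rewrite hmul. simpl.
  destruct (word_hom (eval l) (exist reduced [] I)) as [w|]; simpl in IH |- *;
    [|discriminate (IH (proj1 (proj2 Hl)))].
  injection (IH (proj1 (proj2 Hl))) as Ew.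
  rewrite word_hom_iota, Ew. apply act_letter_cons, Hl.
Qed.

Lemma eval_neq0 l : reduced l -> eval l <> zero.
Proof.
  intros Hl E. pose proof (normal_form_eval l Hl) as W.
  rewrite E in W. unfold normal_form in W. rewrite hzero in W. discriminate.
Qed.

Lemma eval_inj l k : reduced l -> reduced k -> eval l = eval k -> l = k.
Proof.
  intros Hl Hk E. pose proof (normal_form_eval l Hl) as W.
  rewrite E, normal_form_eval in W by exact Hk. congruence.
Qed.


Section FactorDivisibility.
Variables (S : factor) (iX : hom0 S P).
Hypothesis iota_fin : forall x, iota (fin S x) = iX x.

Definition lift (l0 : list letter) (y : S) : P := mul (eval l0) (iX y).

Lemma eval_snoc_fin l0 y : eval (l0 ++ [fin S y]) = lift l0 y.
Proof. rewrite eval_snoc, iota_fin. reflexivity. Qed.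

Lemma lift_rideal l0 r y : in_rideal r y -> in_rideal (lift l0 r) (lift l0 y).
Proof. intros [m ->]. exists (iX m). unfold lift. rewrite hmul, !mulA. reflexivity. Qed.

Lemma lift0 l0 : lift l0 zero = zero.
Proof. unfold lift. rewrite hzero. apply mul0r. Qed.

Lemma lift_neq0 l0 a y : reduced (l0 ++ [fin S a]) -> y <> zero -> lift l0 y <> zero.
Proof.
  intros Hr Hy. destruct (decP (y = one)) as [->|Hy1].
  - unfold lift. rewrite hone, mul1r. exact (eval_neq0 _ (reduced_app_l _ _ Hr)).
  - rewrite <- eval_snoc_fin. apply eval_neq0, (reduced_snoc_fin S l0 a y Hr Hy Hy1).
Qed.

Lemma right_multiple_snoc_fin l0 a y : reduced (l0 ++ [fin S a]) -> ~ has_right_inverse a ->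
  mul (eval (l0 ++ [fin S a])) y = zero \/
  exists m rest, reduced (l0 ++ fin S (mul a m) :: rest) /\
                 mul (eval (l0 ++ [fin S a])) y = eval (l0 ++ fin S (mul a m) :: rest).
Proof.
  intros Hr Ha. destruct (normal_form_exists y) as [->|[k [Hk ->]]]; [left; apply mul0r|].
  rewrite eval_snoc_fin. unfold lift. rewrite <- mulA, (eval_act S iX iota_fin a k Hk).
  destruct (act S a k) as [l|] eqn:E; simpl; [right|left; apply mul0r].
  destruct (act_not_right_invertible S a k l Hk Ha E) as [m [k1 [-> _]]].
  pose proof (act_reduced S a k _ Hk E) as Rl.
  exists m, k1. split; [|rewrite eval_app; reflexivity].
  apply reduced_app_cons. split; [|exact Rl].
  apply reduced_cons_fin in Rl. destruct Rl as [[Hm0 Hm1] _].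
  exact (reduced_snoc_fin S l0 a _ Hr Hm0 Hm1).
Qed.

Lemma common_multiple_snoc_fin_shape l0 a b x :
  reduced (l0 ++ [fin S a]) -> reduced (l0 ++ [fin S b]) ->
  ~ has_right_inverse a -> ~ has_right_inverse b -> x <> zero ->
  common_multiple (eval (l0 ++ [fin S a])) (eval (l0 ++ [fin S b])) x ->
  exists y rest, common_multiple a b y /\ reduced (l0 ++ fin S y :: rest) /\
                 x = eval (l0 ++ fin S y :: rest).
Proof.
  intros Ra Rb Ua Ub Hx [[z ->] [z' Ez']].
  destruct (right_multiple_snoc_fin l0 a z Ra Ua) as [Z|[m [rest [Rm Em]]]]; [contradiction|].
  destruct (right_multiple_snoc_fin l0 b z' Rb Ub) as [Z|[m' [rest' [Rm' Em']]]];
    [congruence|].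
  assert (E : l0 ++ fin S (mul a m) :: rest = l0 ++ fin S (mul b m') :: rest')
    by (apply eval_inj; congruence).
  apply app_inv_head in E. injection E as Ey _. apply fin_inj in Ey.
  exists (mul a m), rest. split; [split; [exists m|exists m']|split]; auto.
Qed.

Lemma common_multiple_snoc_fin l0 a b :
  reduced (l0 ++ [fin S a]) -> reduced (l0 ++ [fin S b]) ->
  ~ has_right_inverse a -> ~ has_right_inverse b ->
  forall x, common_multiple (eval (l0 ++ [fin S a])) (eval (l0 ++ [fin S b])) x <->
            exists y, common_multiple a b y /\ in_rideal (lift l0 y) x.
Proof.
  intros Ra Rb Ua Ub x. split.
  - intro Hx. destruct (decP (x = zero)) as [->|Hx0].
    { exists zero. split; [split|]; apply in_rideal0r. }
    destruct (common_multiple_snoc_fin_shape l0 a b x Ra Rb Ua Ub Hx0 Hx)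
      as [y [rest [Hy [_ ->]]]].
    exists y. split; [exact Hy|]. rewrite eval_snoc_cons, eval_snoc_fin. apply in_rideal_mulr.
  - intros [y [[Ha Hb] Hx]]. rewrite !eval_snoc_fin.
    split; [exact (in_rideal_trans _ _ _ (lift_rideal l0 _ _ Ha) Hx)
           |exact (in_rideal_trans _ _ _ (lift_rideal l0 _ _ Hb) Hx)].
Qed.

Lemma lift_common_multiple l0 a y y' x : reduced (l0 ++ [fin S a]) ->
  in_rideal (lift l0 y) x -> in_rideal (lift l0 y') x -> x <> zero ->
  exists w, w <> zero /\ common_multiple y y' w.
Proof.
  intros Hr Hy Hy' Hx.
  assert (Hnz : forall u, in_rideal (lift l0 u) x -> u <> zero).
  { intros u Hu ->. rewrite lift0 in Hu. exact (Hx (in_rideal0l x Hu)). }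
  destruct (classic (has_right_inverse y)) as [[e He]|Uy].
  { exists y'. split; [exact (Hnz y' Hy')|split; [|apply in_rideal_refl]].
    exists (mul e y'). rewrite mulA, He, mul1l. reflexivity. }
  destruct (classic (has_right_inverse y')) as [[e He]|Uy'].
  { exists y. split; [exact (Hnz y Hy)|split; [apply in_rideal_refl|]].
    exists (mul e y). rewrite mulA, He, mul1l. reflexivity. }
  assert (Hne1 : forall u : S, ~ has_right_inverse u -> u <> one)
    by (intros u Hu ->; apply Hu; exists one; apply mul1l).
  pose proof (reduced_snoc_fin S l0 a y Hr (Hnz y Hy) (Hne1 y Uy)) as Ry.
  pose proof (reduced_snoc_fin S l0 a y' Hr (Hnz y' Hy') (Hne1 y' Uy')) as Ry'.
  rewrite <- eval_snoc_fin in Hy, Hy'.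
  destruct (common_multiple_snoc_fin_shape l0 y y' x Ry Ry' Uy Uy' Hx (conj Hy Hy'))
    as [w [rest [Hw [Rw _]]]].
  exists w. split; [|exact Hw].
  apply reduced_app_cons in Rw. apply (proj1 (proj1 (reduced_cons_fin S w rest) (proj2 Rw))).
Qed.

Lemma cancel_fin (zlc : zero_left_cancellative S) a u v :
  mul (iX a) u = mul (iX a) v -> mul (iX a) u <> zero -> u = v.
Proof.
  intros E Hn.
  destruct (normal_form_exists u) as [->|[k [Hk ->]]]; [rewrite mul0r in Hn; congruence|].
  destruct (normal_form_exists v) as [->|[k' [Hk' ->]]]; [rewrite E, mul0r in Hn; congruence|].
  rewrite (eval_act S iX iota_fin a k Hk) in E, Hn.
  rewrite (eval_act S iX iota_fin a k' Hk') in E.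
  destruct (act S a k) as [l|] eqn:Ek; simpl in *; [|congruence].
  destruct (act S a k') as [l'|] eqn:Ek'; simpl in *; [|congruence].
  assert (l = l') by (apply eval_inj; [exact (act_reduced S a k l Hk Ek)
                                      |exact (act_reduced S a k' l' Hk' Ek')|exact E]).
  subst l'. f_equal. exact (act_inj S zlc a k k' l Hk Hk' Ek Ek').
Qed.

(* The situation where [sP ∩ tP] is read off inside the factor [S]. *)
Definition factor_case (s t : P) : Prop :=
  exists l0 (a b : S), reduced (l0 ++ [fin S a]) /\ reduced (l0 ++ [fin S b]) /\
    ~ has_right_inverse a /\ ~ has_right_inverse b /\
    forall x, common_multiple s t x <->
              common_multiple (eval (l0 ++ [fin S a])) (eval (l0 ++ [fin S b])) x.

Lemma factor_case_image s t : factor_case s t ->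
  exists l0 (a b : S), reduced (l0 ++ [fin S a]) /\
    forall x, common_multiple s t x <-> exists y, common_multiple a b y /\ in_rideal (lift l0 y) x.
Proof.
  intros [l0 [a [b [Ra [Rb [Ua [Ub Hst]]]]]]]. exists l0, a, b. split; [exact Ra|].
  intro x. rewrite Hst. exact (common_multiple_snoc_fin l0 a b Ra Rb Ua Ub x).
Qed.

Lemma factor_case_principal s t :
  admits_lcm S -> factor_case s t -> principal (common_multiple s t).
Proof.
  intros HS Hc. destruct (factor_case_image s t Hc) as [l0 [a [b [_ Himg]]]].
  exact (principal_image S P (lift l0) (lift_rideal l0) _ _ Himg (HS a b)).
Qed.

Lemma factor_case_finitely_generated s t :
  finitely_aligned S -> factor_case s t -> finitely_generated (common_multiple s t).
Proof.
  intros HS Hc. destruct (factor_case_image s t Hc) as [l0 [a [b [_ Himg]]]].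
  exact (finitely_generated_image S P (lift l0) (lift_rideal l0) _ _ Himg (HS a b)).
Qed.

Lemma factor_case_disjointly_generated s t :
  strongly_finitely_aligned S -> factor_case s t -> disjointly_generated (common_multiple s t).
Proof.
  intros HS Hc. destruct (factor_case_image s t Hc) as [l0 [a [b [Ra Himg]]]].
  exact (disjointly_generated_image S P (lift l0) (lift_rideal l0) _ _ Himg (lift0 l0)
           (fun y => lift_neq0 l0 a y Ra) (fun y y' x => lift_common_multiple l0 a y y' x Ra)
           (HS a b)).
Qed.


End FactorDivisibility.

Definition letter_unit (c : letter) : Prop :=
  match c with inl a => has_right_inverse a | inr b => has_right_inverse b end.

Definition letter_divides (c c' : letter) : Prop :=
  match c, c' with
  | inl a, inl a' => in_rideal a a'
  | inr b, inr b' => in_rideal b b'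
  | _, _ => False
  end.

Lemma letter_divides_side c c' : letter_divides c c' -> side c = side c'.
Proof. destruct c, c'; simpl; tauto. Qed.

Lemma letter_unit_iota c : letter_unit c -> has_right_inverse (iota c).
Proof.
  destruct c as [a|b]; intros [d E]; [exists (iM d)|exists (iN d)]; simpl;
    rewrite <- hmul, E; apply hone.
Qed.

Lemma letter_divides_rideal l0 c c' l1 :
  letter_divides c c' -> in_rideal (eval (l0 ++ [c])) (eval (l0 ++ c' :: l1)).
Proof.
  intro H. assert (Hc : in_rideal (iota c) (iota c')).
  { destruct c, c'; simpl in H |- *; try contradiction; destruct H as [m ->];
      [exists (iM m)|exists (iN m)]; apply hmul. }
  destruct Hc as [u Eu]. exists (mul u (eval l1)).
  rewrite eval_snoc_cons, !eval_snoc, Eu, !mulA. reflexivity.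
Qed.

Lemma right_multiple_snoc l0 c y : reduced (l0 ++ [c]) -> ~ letter_unit c ->
  mul (eval (l0 ++ [c])) y = zero \/
  exists c' rest, letter_divides c c' /\ reduced (l0 ++ c' :: rest) /\
                  mul (eval (l0 ++ [c])) y = eval (l0 ++ c' :: rest).
Proof.
  destruct c as [a|b]; intros Hr Hu.
  - destruct (right_multiple_snoc_fin (factorM ntM) iM (fun _ => eq_refl) l0 a y Hr Hu)
      as [Z|[m [rest [Rm Em]]]]; [left; exact Z|right].
    exists (inl (mul a m)), rest. split; [exists m; reflexivity|auto].
  - destruct (right_multiple_snoc_fin (factorN ntN) iN (fun _ => eq_refl) l0 b y Hr Hu)
      as [Z|[m [rest [Rm Em]]]]; [left; exact Z|right].
    exists (inr (mul b m)), rest. split; [exists m; reflexivity|auto].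
Qed.

(* Trailing letters with a right inverse do not change the principal right ideal. *)
Lemma rideal_generator_cases s : s = zero \/ in_rideal s one \/
  exists l0 c, reduced (l0 ++ [c]) /\ ~ letter_unit c /\
    forall x, in_rideal s x <-> in_rideal (eval (l0 ++ [c])) x.
Proof.
  destruct (normal_form_exists s) as [->|[l [Hl ->]]]; [left; reflexivity|right].
  induction l as [|c l IH] using rev_ind; [left; apply in_rideal_refl|].
  destruct (classic (letter_unit c)) as [Hu|Hu].
  - assert (Ec : forall x, in_rideal (eval (l ++ [c])) x <-> in_rideal (eval l) x)
      by (intro x; rewrite eval_snoc; apply in_rideal_mul_right_invertible, letter_unit_iota, Hu).
    destruct (IH (reduced_app_l _ _ Hl)) as [H|[l0 [c0 [R0 [U0 E0]]]]].
    + left. apply Ec, H.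
    + right. exists l0, c0. split; [exact R0|split; [exact U0|]]. intro x. rewrite Ec. apply E0.
  - right. exists l, c. split; [exact Hl|split; [exact Hu|reflexivity]].
Qed.

Lemma common_multiple_snoc_cases l0 c k0 d x :
  reduced (l0 ++ [c]) -> reduced (k0 ++ [d]) -> ~ letter_unit c -> ~ letter_unit d ->
  x <> zero -> common_multiple (eval (l0 ++ [c])) (eval (k0 ++ [d])) x ->
  in_rideal (eval (l0 ++ [c])) (eval (k0 ++ [d])) \/
  in_rideal (eval (k0 ++ [d])) (eval (l0 ++ [c])) \/ (l0 = k0 /\ side c = side d).
Proof.
  intros Rc Rd Uc Ud Hx [[z ->] [z' Ez']].
  destruct (right_multiple_snoc l0 c z Rc Uc) as [Z|[c' [rest [Dc [Rc' Ec']]]]];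
    [contradiction|].
  destruct (right_multiple_snoc k0 d z' Rd Ud) as [Z|[d' [rest' [Dd [Rd' Ed']]]]];
    [congruence|].
  assert (E : l0 ++ c' :: rest = k0 ++ d' :: rest') by (apply eval_inj; congruence).
  apply app_eq_app in E. destruct E as [[|e l1] [[-> E]|[-> E]]]; simpl in E;
    rewrite ?app_nil_r in *; injection E as <- ?.
  - right; right. split; [reflexivity|].
    rewrite (letter_divides_side _ _ Dc), (letter_divides_side _ _ Dd). reflexivity.
  - right; right. split; [reflexivity|].
    rewrite (letter_divides_side _ _ Dc), (letter_divides_side _ _ Dd). reflexivity.
  - right; left. rewrite <- app_assoc. apply letter_divides_rideal, Dd.
  - left. rewrite <- app_assoc. apply letter_divides_rideal, Dc.
Qed.

Lemma common_multiple_cases s t :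
  principal (common_multiple s t) \/
  factor_case (factorM ntM) s t \/ factor_case (factorN ntN) s t.
Proof.
  assert (Hone : forall u v : P, in_rideal u one -> in_rideal u v).
  { intros u v H. apply (in_rideal_trans _ _ _ H). exists v. symmetry. apply mul1l. }
  destruct (rideal_generator_cases s) as [->|[Hs|[l0 [c [Rc [Uc Es]]]]]];
    [left; apply principal_common_multiple_r, in_rideal0r
    |left; apply principal_common_multiple_l, Hone, Hs|].
  destruct (rideal_generator_cases t) as [->|[Ht|[k0 [d [Rd [Ud Et]]]]]];
    [left; apply principal_common_multiple_l, in_rideal0r
    |left; apply principal_common_multiple_r, Hone, Ht|].
  assert (Hst : forall x, common_multiple s t x <->
                          common_multiple (eval (l0 ++ [c])) (eval (k0 ++ [d])) x)
    by (intro x; unfold common_multiple; rewrite Es, Et; reflexivity).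
  destruct (classic (exists x, x <> zero /\ common_multiple s t x)) as [[x [Hx0 Hx]]|Hno].
  2: { left. apply principal_common_multiple_trivial. intros x Hx.
       apply NNPP. intro Hx0. apply Hno. exists x. split; assumption. }
  apply Hst in Hx.
  destruct (common_multiple_snoc_cases l0 c k0 d x Rc Rd Uc Ud Hx0 Hx) as [H|[H|[<- Hcd]]].
  - left. apply principal_common_multiple_l, Es.
    apply (in_rideal_trans _ _ _ H), Et, in_rideal_refl.
  - left. apply principal_common_multiple_r, Et.
    apply (in_rideal_trans _ _ _ H), Es, in_rideal_refl.
  - right. destruct c as [a|b], d as [a'|b']; simpl in Hcd; try discriminate; [left|right].
    + exists l0, a, a'. auto 6.
    + exists l0, b, b'. auto 6.
Qed.

Lemma cancel_letter c u v :
  zero_left_cancellative M -> zero_left_cancellative N ->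
  mul (iota c) u = mul (iota c) v -> mul (iota c) u <> zero -> u = v.
Proof.
  intros zM zN. destruct c as [a|b].
  - exact (cancel_fin (factorM ntM) iM (fun _ => eq_refl) zM a u v).
  - exact (cancel_fin (factorN ntN) iN (fun _ => eq_refl) zN b u v).
Qed.

Lemma coproduct_zero_left_cancellative :
  zero_left_cancellative M -> zero_left_cancellative N -> zero_left_cancellative P.
Proof.
  intros zM zN s t r E Hn.
  destruct (normal_form_exists s) as [->|[l [_ ->]]]; [rewrite mul0l in Hn; congruence|].
  induction l as [|c l IH]; simpl in E, Hn; [rewrite !mul1l in E; exact E|].
  rewrite <- mulA in Hn. rewrite <- !mulA in E. apply IH.
  - intro Z. apply Hn. rewrite Z. apply mul0r.
  - exact (cancel_letter c _ _ zM zN E Hn).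
Qed.

Lemma coproduct_admits_lcm : admits_lcm M -> admits_lcm N -> admits_lcm P.
Proof.
  intros HM HN s t. destruct (common_multiple_cases s t) as [H|[H|H]]; [exact H|..].
  - exact (factor_case_principal (factorM ntM) iM (fun _ => eq_refl) s t HM H).
  - exact (factor_case_principal (factorN ntN) iN (fun _ => eq_refl) s t HN H).
Qed.

Lemma coproduct_finitely_aligned :
  finitely_aligned M -> finitely_aligned N -> finitely_aligned P.
Proof.
  intros HM HN s t.
  destruct (common_multiple_cases s t) as [H|[H|H]]; [exact (principal_finitely_generated _ H)|..].
  - exact (factor_case_finitely_generated (factorM ntM) iM (fun _ => eq_refl) s t HM H).
  - exact (factor_case_finitely_generated (factorN ntN) iN (fun _ => eq_refl) s t HN H).
Qed.

Lemma coproduct_strongly_finitely_aligned :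
  strongly_finitely_aligned M -> strongly_finitely_aligned N -> strongly_finitely_aligned P.
Proof.
  intros HM HN s t.
  destruct (common_multiple_cases s t) as [H|[H|H]]; [exact (principal_disjointly_generated _ H)|..].
  - exact (factor_case_disjointly_generated (factorM ntM) iM (fun _ => eq_refl) s t HM H).
  - exact (factor_case_disjointly_generated (factorN ntN) iN (fun _ => eq_refl) s t HN H).
Qed.

End FreeProduct.
End Words.

Theorem theorem9p5 (M N P : monoid0) (iM : hom0 M P) (iN : hom0 N P) :
  nontrivial M -> nontrivial N ->
  zero_left_cancellative M -> zero_left_cancellative N ->
  is_coproduct0 M N P iM iN ->
  zero_left_cancellative P /\
  (admits_lcm M -> admits_lcm N -> admits_lcm P) /\
  (finitely_aligned M -> finitely_aligned N -> finitely_aligned P) /\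
  (strongly_finitely_aligned M -> strongly_finitely_aligned N ->
     strongly_finitely_aligned P).
Proof.
  intros ntM ntN zM zN coprod.
  split; [|split; [|split]].
  - exact (coproduct_zero_left_cancellative M N P iM iN ntM ntN coprod zM zN).
  - exact (coproduct_admits_lcm M N P iM iN ntM ntN coprod).
  - exact (coproduct_finitely_aligned M N P iM iN ntM ntN coprod).
  - exact (coproduct_strongly_finitely_aligned M N P iM iN ntM ntN coprod).
Qed.
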